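(* Let $\nu_0=0$ (so $\nu_1=1$) and $s,u>0$, $\gamma\ge 0$, and consider the ODE $\dot y=F(y)$ with $F(y)=-y(1-y)\big[s+\gamma(1-y)\big]+u(1-y)$, regarded on $\mathbb R$. Put $\hat u=s$ and, for $\gamma>0$, $\check u=\frac1\gamma\big(\frac{s+\gamma}{2}\big)^2$. (a) If $\gamma=0$, the equilibria are $\bar y_1=1$ and $\bar y_2=u/s$, with $\bar y_1=\bar y_2=1$ if $u=\hat u$. The smaller of the two is always stable; the other one (if distinct) is unstable. (b) Let $\gamma>0$. If $u>\check u$, then $\bar y_1=1$ is the only equilibrium, and it is stable. If $u\le\check u$, the equilibria are $$\bar y_1=1,\qquad \bar y_2=\tfrac12\Big(1+\tfrac s\gamma-\sqrt\sigma\Big),\qquad \bar y_3=\tfrac12\Big(1+\tfrac s\gamma+\sqrt\sigma\Big),\qquad \sigma=\Big(1+\tfrac s\gamma\Big)^2-4\tfrac u\gamma\ge 0.$$ Their positions, together with which of them are stable as equilibria in $[0,1]$, are as follows. - If $u<\hat u$ (any $\gamma>0$): $0<\bar y_2<\bar y_1=1<\bar y_3$; $\bar y_2$ is stable. - If $u=\hat u$ and $\gamma<s$: $1=\bar y_1=\bar y_2<\bar y_3=s/\gamma$; $\bar y_1=\bar y_2$ is stable. - If $u=\hat u$ and $\gamma=s$: $1=\bar y_1=\bar y_2=\bar y_3$, which is stable. - If $u=\hat u$ and $\gamma>s$: $0<\bar y_2=s/\gamma<\bar y_1=\bar y_3=1$; $\bar y_2$ is stable. - If $\hat u<u<\check u$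 and $\gamma<s$: $1=\bar y_1<\bar y_2<\bar y_3$; $\bar y_1$ is stable. - If $\hat u<u<\check u$ and $\gamma>s$: $0<\bar y_2<\bar y_3<\bar y_1=1$; $\bar y_2$ and $\bar y_1$ are stable. - If $u=\check u$ and $\gamma<s$: $1=\bar y_1<\bar y_2=\bar y_3=(\gamma+s)/(2\gamma)$; $\bar y_1$ is stable. - If $u=\check u$ and $\gamma=s$: $1=\bar y_1=\bar y_2=\bar y_3$, which is stable. - If $u=\check u$ and $\gamma>s$: $\frac12<\bar y_2=\bar y_3=(\gamma+s)/(2\gamma)<\bar y_1=1$; $\bar y_1$ is stable.
   Context: ''Stable'' means locally asymptotically stable. The case $\gamma=s$, $\hat u<u<\check u$ cannot occur, because $\hat u=\check u$ when $\gamma=s$; in general $\check u-\hat u=(s-\gamma)^2/(4\gamma)\ge 0$. *)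

From Stdlib Require Import Reals.
Open Scope R_scope.

Definition Fode (s g u : R) (y : R) : R :=
  - y * (1 - y) * (s + g * (1 - y)) + u * (1 - y).

Definition uhat (s : R) : R := s.
Definition ucheck (s g : R) : R := / g * ((s + g) / 2) ^ 2.
Definition sigma_disc (s g u : R) : R := (1 + s / g) ^ 2 - 4 * (u / g).
Definition ybar2 (s g u : R) : R := / 2 * (1 + s / g - sqrt (sigma_disc s g u)).
Definition ybar3 (s g u : R) : R := / 2 * (1 + s / g + sqrt (sigma_disc s g u)).

Definition I01 (y : R) : Prop := 0 <= y <= 1.
Definition wholeR (y : R) : Prop := True.

Definition is_sol (F : R -> R) (D : R -> Prop) (y : R -> R) : Prop :=
  forall t, 0 <= t -> D (y t) /\ derivable_pt_lim y t (F (y t)).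

Definition lyap_stable (F : R -> R) (D : R -> Prop) (ye : R) : Prop :=
  forall eps, 0 < eps -> exists delta, 0 < delta /\
    forall y, is_sol F D y -> Rabs (y 0 - ye) < delta ->
      forall t, 0 <= t -> Rabs (y t - ye) < eps.

Definition attractive (F : R -> R) (D : R -> Prop) (ye : R) : Prop :=
  exists delta, 0 < delta /\
    forall y, is_sol F D y -> Rabs (y 0 - ye) < delta ->
      forall eps, 0 < eps -> exists T, forall t, T <= t -> Rabs (y t - ye) < eps.

Definition LAS (F : R -> R) (D : R -> Prop) (ye : R) : Prop :=
  D ye /\ F ye = 0 /\ lyap_stable F D ye /\ attractive F D ye.

Definition unstable (F : R -> R) (D : R -> Prop) (ye : R) : Prop :=
  ~ lyap_stable F D ye.

From Stdlib Require Import Reals Lra Ranalysis5 Classical ClassicalEpsilon.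
From Coquelicot Require Import Coquelicot.
Open Scope R_scope.

(* In dimension one the stability of an equilibrium e is read off from the sign of F
   near e.  If (z - e) F(z) < 0 on a punctured neighbourhood of e, then (y - e)^2
   decreases along solutions, which gives stability, and decreases at a definite rate
   away from e, which gives attractivity.  If F pushes away from e on one side, up to
   the next zero p, a solution leaving e is obtained by inverting the travel time
   T(z) = int_{z0}^{z} dw / F(w); it exists for all times because F vanishes at most
   linearly at p, so that T diverges logarithmically there.

   For g > 0 and u <= ucheck, F(z) = g (1 - z) (z - ybar2) (z - ybar3), and Vieta's
   relations ybar2 + ybar3 = 1 + s/g, ybar2 ybar3 = u/g and
   (1 - ybar2) (1 - ybar3) = (u - s)/g locate the roots with respect to 0 and 1 in each
   regime; the stable equilibria are then read off from the sign pattern of the cubic. *)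

Lemma first_hitting_time (V : R -> R) t1 c : 0 < t1 ->
  (forall t, 0 <= t <= t1 -> continuity_pt V t) -> V 0 < c -> c <= V t1 ->
  exists tau, 0 < tau <= t1 /\ V tau = c /\ forall t, 0 <= t <= tau -> V t <= c.
Proof.
  intros Ht1 HV H0 H1.
  set (below := fun t => 0 <= t <= t1 /\ forall s, 0 <= s <= t -> V s <= c).
  assert (below0 : below 0).
  { split; [lra |]. intros s Hs. replace s with 0 by lra. lra. }
  destruct (completeness below) as [tau [Hub Hlub]].
  { exists t1. intros t [Ht _]. lra. }
  { exists 0. exact below0. }
  assert (Htau0 : 0 <= tau) by (apply Hub; exact below0).
  assert (Htau1 : tau <= t1) by (apply Hlub; intros t [Ht _]; lra).
  assert (Hcont := HV tau (conj Htau0 Htau1)).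
  assert (before : forall s, 0 <= s < tau -> V s <= c).
  { intros s Hs. destruct (Rle_or_lt (V s) c) as [h | h]; [exact h |].
    enough (tau <= s) by lra. apply Hlub. intros t [_ Ht].
    destruct (Rle_or_lt t s) as [h' | h']; [exact h' |].
    specialize (Ht s ltac:(lra)). lra. }
  assert (at_le : V tau <= c).
  { destruct (Rle_or_lt (V tau) c) as [h | h]; [exact h |].
    assert (Htau : 0 < tau) by (destruct Htau0 as [| <-]; lra).
    destruct (proj1 (continuity_pt_locally V tau) Hcont (mkposreal (V tau - c) ltac:(lra)))
      as [d Hball].
    pose proof (cond_pos d) as Hd.
    set (s := Rmax 0 (tau - d / 2)).
    assert (Hs : 0 <= s < tau) by (unfold s, Rmax; destruct Rle_dec; lra).
    assert (Hsd : Rabs (s - tau) < d) by (unfold s, Rmax; destruct Rle_dec; apply Rabs_def1; lra).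
    specialize (Hball s Hsd). simpl in Hball. specialize (before s Hs).
    apply Rabs_def2 in Hball. lra. }
  assert (at_eq : V tau = c).
  { destruct at_le as [h | h]; [exfalso | exact h].
    assert (Htt : tau < t1) by (destruct Htau1 as [| ->]; lra).
    destruct (proj1 (continuity_pt_locally V tau) Hcont (mkposreal (c - V tau) ltac:(lra)))
      as [d Hball].
    pose proof (cond_pos d) as Hd.
    set (t' := Rmin (tau + d / 2) t1).
    assert (Ht' : tau < t' <= t1) by (unfold t', Rmin; destruct Rle_dec; lra).
    enough (below t') by (assert (t' <= tau) by (apply Hub; auto); lra).
    split; [lra |]. intros s Hs. destruct (Rlt_or_le s tau) as [h1 | h1]; [apply before; lra |].
    assert (Hsd : Rabs (s - tau) < d).
    { apply Rabs_def1; unfold t', Rmin in Hs; destruct Rle_dec; lra. }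
    specialize (Hball s Hsd). simpl in Hball. apply Rabs_def2 in Hball. lra. }
  exists tau. repeat split; [| lra | exact at_eq |].
  - destruct Htau0 as [| <-]; [lra | rewrite at_eq in H0; lra].
  - intros s [Hs0 [Hs | ->]]; [apply before; lra | lra].
Qed.

Lemma is_sol_continuity_pt F D y t : is_sol F D y -> 0 <= t -> continuity_pt y t.
Proof.
  intros Hy Ht. apply derivable_continuous_pt. exists (F (y t)). apply (Hy t Ht).
Qed.

Lemma is_sol_shift F D y T : 0 <= T -> is_sol F D y -> is_sol F D (fun t => y (t + T)).
Proof.
  intros HT Hy t Ht. destruct (Hy (t + T) ltac:(lra)) as [HD Hd]. split; [exact HD |].
  assert (Hshift : derivable_pt_lim (fun t => t + T) t 1).
  { replace 1 with (1 + 0) by ring.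
    apply derivable_pt_lim_plus; [apply derivable_pt_lim_id | apply derivable_pt_lim_const]. }
  rewrite <- (Rmult_1_r (F (y (t + T)))). exact (derivable_pt_lim_comp _ _ _ _ _ Hshift Hd).
Qed.

Lemma MVT_sqr_dist (y : R -> R) F e a b : a < b ->
  (forall t, a <= t <= b -> derivable_pt_lim y t (F (y t))) ->
  exists xi, a <= xi <= b /\
    (y b - e) ^ 2 - (y a - e) ^ 2 = 2 * (y xi - e) * F (y xi) * (b - a).
Proof.
  intros Hab Hy.
  assert (HV : forall t, a <= t <= b ->
    derivable_pt_lim (fun t => (y t - e) ^ 2) t (2 * (y t - e) * F (y t))).
  { intros t Ht. apply is_derive_Reals.
    apply (is_derive_ext (fun t => (y t - e) * (y t - e))); [intros t'; simpl; ring |].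
    replace (2 * (y t - e) * F (y t)) with (F (y t) * (y t - e) + (y t - e) * F (y t)) by ring.
    assert (Hd : is_derive (fun t => y t - e) t (F (y t))).
    { apply is_derive_Reals. replace (F (y t)) with (F (y t) - 0) by ring.
      apply derivable_pt_lim_minus; [apply Hy; lra | apply derivable_pt_lim_const]. }
    exact (is_derive_mult _ _ _ _ _ Hd Hd (fun _ _ => Rmult_comm _ _)). }
  destruct (MVT_gen (fun t => (y t - e) ^ 2) a b (fun t => 2 * (y t - e) * F (y t)))
    as [xi [Hxi Heq]]; rewrite ?Rmin_left, ?Rmax_right in * by lra.
  - intros x Hx. apply is_derive_Reals, HV. lra.
  - intros x Hx. apply derivable_continuous_pt. eexists. apply HV. exact Hx.
  - exists xi. split; assumption.
Qed.

Lemma continuity_pos_lower_bound (h : R -> R) a b :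
  (forall z, a <= z <= b -> continuity_pt h z) -> (forall z, a <= z <= b -> 0 < h z) ->
  exists mu, 0 < mu /\ forall z, a <= z <= b -> mu <= h z.
Proof.
  intros Hc Hp. destruct (Rle_or_lt a b) as [Hab | Hab].
  - destruct (continuity_ab_min h a b Hab Hc) as [x [Hmin Hx]].
    exists (h x). split; [apply Hp |]; assumption.
  - exists 1. split; [lra | intros z Hz; lra].
Qed.

Section InwardField.

Variables (F : R -> R) (e r : R).
Hypothesis F_cont : continuity F.
Hypothesis e_in : I01 e.
Hypothesis r_pos : 0 < r.
Hypothesis inward :
  forall z, I01 z -> z <> e -> Rabs (z - e) < r -> (z - e) * F z < 0.

Lemma sol_stays_near y m : is_sol F I01 y -> 0 < m <= r -> Rabs (y 0 - e) < m ->
  forall t, 0 <= t -> Rabs (y t - e) < m.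
Proof.
  intros Hy Hm H0 t1 Ht1.
  destruct (Rlt_or_le (Rabs (y t1 - e)) m) as [h | h]; [exact h | exfalso].
  assert (Ht1' : 0 < t1) by (destruct Ht1 as [| <-]; lra).
  set (V := fun t => (y t - e) ^ 2).
  set (c := ((y 0 - e) ^ 2 + m ^ 2) / 2).
  assert (Habs0 := Rabs_pos (y 0 - e)).
  assert (HV0 : V 0 < c /\ c < m ^ 2).
  { unfold V, c. rewrite <- (pow2_abs (y 0 - e)). split; nra. }
  assert (HV1 : c <= V t1).
  { unfold V, c. rewrite <- (pow2_abs (y 0 - e)), <- (pow2_abs (y t1 - e)). nra. }
  (* At the first time V reaches the level c, the mean value theorem on [0, tau]
     contradicts the decrease of V inside the r-neighbourhood of e. *)
  destruct (first_hitting_time V t1 c Ht1') as [tau [Htau [Hc Hle]]]; [| lra | exact HV1 |].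
  { intros t Ht. apply continuity_pt_filterlim.
    apply (continuous_comp (fun t => y t - e) (fun x => x ^ 2)); apply continuity_pt_filterlim.
    - apply continuity_pt_minus; [apply (is_sol_continuity_pt F I01 y t Hy); lra |].
      apply continuity_pt_const. intros ? ?; reflexivity.
    - reg. }
  destruct (MVT_sqr_dist y F e 0 tau) as [xi [Hxi Heq]]; [lra | intros; apply Hy; lra |].
  assert (HVxi : V xi <= c) by (apply Hle; lra).
  fold (V tau) (V 0) in Heq.
  destruct (Req_dec (y xi) e) as [E | NE].
  - rewrite E, Rminus_diag in Heq. lra.
  - assert (Hr : Rabs (y xi - e) < r).
    { assert (Habs := Rabs_pos (y xi - e)). unfold V in HVxi.
      rewrite <- (pow2_abs (y xi - e)) in HVxi. nra. }
    specialize (inward (y xi) (proj1 (Hy xi (proj1 Hxi))) NE Hr). nra.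
Qed.

Lemma inward_rate_lower_bound ep : 0 < ep ->
  exists mu, 0 < mu /\
    forall z, I01 z -> ep <= Rabs (z - e) <= r / 2 -> mu <= - ((z - e) * F z).
Proof.
  intros Hep. destruct e_in. set (h := fun z => - ((z - e) * F z)).
  assert (Hh : forall z, continuity_pt h z).
  { intros z. apply continuity_pt_opp, continuity_pt_mult; [reg | apply F_cont]. }
  assert (Hpos : forall z, I01 z -> z <> e -> Rabs (z - e) < r -> 0 < h z).
  { intros z Hz Hze Hzr. specialize (inward z Hz Hze Hzr). unfold h. lra. }
  destruct (continuity_pos_lower_bound h (Rmax 0 (e - r / 2)) (e - ep)) as [mu1 [Hmu1 Hl]].
  { intros; apply Hh. }
  { intros z Hz. pose proof (Rmax_l 0 (e - r / 2)). pose proof (Rmax_r 0 (e - r / 2)).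
    apply Hpos; [unfold I01 | | apply Rabs_def1]; lra. }
  destruct (continuity_pos_lower_bound h (e + ep) (Rmin 1 (e + r / 2))) as [mu2 [Hmu2 Hr]].
  { intros; apply Hh. }
  { intros z Hz. pose proof (Rmin_l 1 (e + r / 2)). pose proof (Rmin_r 1 (e + r / 2)).
    apply Hpos; [unfold I01 | | apply Rabs_def1]; lra. }
  exists (Rmin mu1 mu2). split; [apply Rmin_pos; assumption |].
  intros z Hz [Hz1 Hz2]. unfold I01 in Hz. fold (h z).
  destruct (Rle_or_lt z e) as [Hze | Hze].
  - rewrite Rabs_left1 in Hz1, Hz2 by lra.
    apply Rle_trans with mu1; [apply Rmin_l | apply Hl; split; [apply Rmax_lub |]; lra].
  - rewrite Rabs_right in Hz1, Hz2 by lra.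
    apply Rle_trans with mu2; [apply Rmin_r | apply Hr; split; [| apply Rmin_glb]; lra].
Qed.

Lemma sol_gets_near y : is_sol F I01 y -> Rabs (y 0 - e) < r / 2 ->
  forall ep, 0 < ep -> exists T, 0 <= T /\ Rabs (y T - e) < ep.
Proof.
  intros Hy H0 ep Hep. apply NNPP. intros Hfar.
  destruct (inward_rate_lower_bound ep Hep) as [mu [Hmu Hrate]].
  assert (Hdecay : forall t, 0 <= t -> mu <= - ((y t - e) * F (y t))).
  { intros t Ht. apply Hrate; [apply Hy; exact Ht | split].
    - destruct (Rlt_or_le (Rabs (y t - e)) ep) as [h | h]; [| exact h].
      exfalso. apply Hfar. exists t. split; assumption.
    - left. apply (sol_stays_near y (r / 2) Hy); lra. }
  (* Otherwise (y - e)^2 decreases at rate at least 2 mu and is negative at time T. *)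
  set (T := (y 0 - e) ^ 2 / mu + 1).
  assert (HT : T * mu = (y 0 - e) ^ 2 + mu) by (unfold T; field; lra).
  assert (HT0 : 0 < T) by (unfold T; assert (0 <= (y 0 - e) ^ 2 / mu)
    by (apply Rdiv_le_0_compat; [apply pow2_ge_0 | lra]); lra).
  destruct (MVT_sqr_dist y F e 0 T) as [xi [Hxi Heq]]; [lra | intros; apply Hy; lra |].
  specialize (Hdecay xi (proj1 Hxi)).
  assert (0 <= (y T - e) ^ 2) by apply pow2_ge_0. nra.
Qed.

Lemma LAS_of_inward : F e = 0 -> LAS F I01 e.
Proof.
  intros HFe. split; [exact e_in |]. split; [exact HFe |]. split.
  - intros eps Heps. exists (Rmin eps r). split; [apply Rmin_pos; lra |].
    intros y Hy H0 t Ht.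
    apply Rlt_le_trans with (Rmin eps r); [| apply Rmin_l].
    apply (sol_stays_near y); [exact Hy | | exact H0 | exact Ht].
    split; [apply Rmin_pos; lra | apply Rmin_r].
  - exists (r / 2). split; [lra |]. intros y Hy H0 eps Heps.
    set (ep := Rmin eps (r / 2)).
    assert (Hep : 0 < ep <= r).
    { pose proof (Rmin_r eps (r / 2)). unfold ep. split; [apply Rmin_pos |]; lra. }
    destruct (sol_gets_near y Hy H0 ep (proj1 Hep)) as [T [HT HyT]].
    exists T. intros t Ht.
    assert (Hnear := sol_stays_near _ ep (is_sol_shift F I01 y T HT Hy) Hep).
    simpl in Hnear. rewrite Rplus_0_l in Hnear. specialize (Hnear HyT (t - T) ltac:(lra)).
    replace (t - T + T) with t in Hnear by ring.
    apply Rlt_le_trans with ep; [exact Hnear | apply Rmin_l].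
Qed.

End InwardField.

Lemma LAS_of_factor (F q : R -> R) e r : I01 e -> 0 < r -> continuity F ->
  (forall z, F z = (e - z) * q z) ->
  (forall z, I01 z -> z <> e -> Rabs (z - e) < r -> 0 < q z) ->
  LAS F I01 e.
Proof.
  intros He Hr HF Hfac Hq. apply (LAS_of_inward F e r); auto.
  - intros z Hz Hze Hzr. rewrite Hfac.
    assert (0 < (z - e) * (z - e)) by (apply Rsqr_pos_lt; lra).
    specialize (Hq z Hz Hze Hzr). nra.
  - rewrite Hfac. ring.
Qed.

Lemma derivable_pt_lim_inverse (T y dT : R -> R) a b t :
  a < b -> T a < t < T b ->
  (forall z, a <= z <= b -> derivable_pt_lim T z (dT z)) ->
  (forall z1 z2, a <= z1 -> z1 < z2 -> z2 <= b -> T z1 < T z2) ->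
  (forall x, T a <= x <= T b -> a <= y x <= b /\ T (y x) = x) ->
  dT (y t) <> 0 ->
  derivable_pt_lim y t (/ dT (y t)).
Proof.
  intros Hab Ht HT Hinc Hy HdT.
  assert (Hya : y (T a) = a).
  { destruct (Hy (T a)) as [[[Hya | <-] Hyb] HTya]; [lra | | reflexivity].
    specialize (Hinc a (y (T a))). lra. }
  assert (Hyb : y (T b) = b).
  { destruct (Hy (T b)) as [[Hya0 [Hyb | ->]] HTyb]; [lra | | reflexivity].
    specialize (Hinc (y (T b)) b). lra. }
  assert (Prf : forall z, y (T a) <= z <= y (T b) -> derivable_pt T z).
  { rewrite Hya, Hyb. intros z Hz. exists (dT z). apply HT, Hz. }
  assert (Prg : continuity_pt y t).
  { apply (continuity_pt_recip_interv T y a b Hab Hinc); [| | | exact Ht].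
    - intros x Hx1 Hx2. apply (Hy x (conj Hx1 Hx2)).
    - intros x Hx1 Hx2. apply (Hy x (conj Hx1 Hx2)).
    - intros z Hz. apply derivable_continuous_pt. exists (dT z). apply HT, Hz. }
  assert (Hyt : y (T a) <= y t <= y (T b)).
  { rewrite Hya, Hyb. apply Hy. lra. }
  assert (HdTt : derivable_pt_lim T (y t) (dT (y t))).
  { apply HT. rewrite <- Hya, <- Hyb. exact Hyt. }
  assert (Hd : derive_pt T (y t) (Prf (y t) Hyt) = dT (y t))
    by exact (derive_pt_eq_0 _ _ _ _ HdTt).
  replace (/ dT (y t)) with (1 / derive_pt T (y t) (Prf (y t) Hyt))
    by (rewrite Hd; field; exact HdT).
  apply (derivable_pt_lim_recip_interv T y (T a) (T b) t Prf Prg); [lra | exact Ht | |].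
  - intros x Hx. apply Hy, Hx.
  - rewrite Hd. exact HdT.
Qed.

Section Escape.

Variables (F H : R -> R) (zl z0 p : R).
Hypothesis start : zl < z0 < p.
Hypothesis F_cont : continuity F.
Hypothesis H_cont : continuity H.
Hypothesis F_pos : forall z, zl <= z < p -> 0 < F z.
Hypothesis F_factor : forall z, F z = (p - z) * H z.

Definition escape_time z := RInt (fun w => / F w) z0 z.

Lemma inv_F_continuous z : zl <= z < p -> continuous (fun w => / F w) z.
Proof.
  intros Hz. apply continuity_pt_filterlim, continuity_pt_inv; [apply F_cont |].
  apply Rgt_not_eq, F_pos, Hz.
Qed.

Lemma ex_RInt_inv_F a b : zl <= a < p -> zl <= b < p -> ex_RInt (fun w => / F w) a b.
Proof.
  intros Ha Hb. apply (@ex_RInt_continuous R_CompleteNormedModule).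
  intros z Hz. apply inv_F_continuous.
  assert (zl <= Rmin a b) by (apply Rmin_glb; lra).
  assert (Rmax a b < p) by (apply Rmax_lub_lt; lra).
  lra.
Qed.

Lemma escape_time_derivable z : zl < z < p -> derivable_pt_lim escape_time z (/ F z).
Proof.
  intros Hz. apply is_derive_Reals.
  apply (is_derive_RInt (V := R_CompleteNormedModule) (fun w => / F w) escape_time z0 z).
  - assert (Hr : 0 < Rmin (z - zl) (p - z)) by (apply Rmin_pos; lra).
    exists (mkposreal _ Hr). intros w Hw. change (Rabs (w - z) < Rmin (z - zl) (p - z)) in Hw.
    pose proof (Rmin_l (z - zl) (p - z)). pose proof (Rmin_r (z - zl) (p - z)).
    apply Rabs_def2 in Hw. apply RInt_correct, ex_RInt_inv_F; lra.
  - apply inv_F_continuous. lra.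
Qed.

Lemma escape_time_increasing z1 z2 : zl < z1 -> z1 < z2 -> z2 < p ->
  escape_time z1 < escape_time z2.
Proof.
  intros Hz1 H12 Hz2.
  destruct (MVT_gen escape_time z1 z2 (fun w => / F w)) as [c [Hc Heq]];
    rewrite ?Rmin_left, ?Rmax_right in * by lra.
  - intros x Hx. apply is_derive_Reals, escape_time_derivable. lra.
  - intros x Hx. apply derivable_continuous_pt. exists (/ F x).
    apply escape_time_derivable. lra.
  - assert (0 < / F c) by (apply Rinv_0_lt_compat, F_pos; lra). nra.
Qed.

Lemma F_linear_bound : exists M, 0 < M /\ forall z, z0 <= z < p -> F z <= M * (p - z).
Proof.
  destruct (continuity_ab_min (fun w => - H w) z0 p) as [w [Hw _]]; [lra | |].
  { intros z _. apply continuity_pt_opp, H_cont. }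
  exists (Rmax 1 (H w)). split; [apply Rlt_le_trans with 1; [lra | apply Rmax_l] |].
  intros z Hz. rewrite F_factor, Rmult_comm. apply Rmult_le_compat_r; [lra |].
  apply Rle_trans with (H w); [| apply Rmax_r]. specialize (Hw z ltac:(lra)). lra.
Qed.

Lemma escape_time_ge_log M : 0 < M -> (forall z, z0 <= z < p -> F z <= M * (p - z)) ->
  forall z, z0 <= z < p -> (ln (p - z0) - ln (p - z)) / M <= escape_time z.
Proof.
  intros HM HFM z Hz.
  assert (Hint : is_RInt (fun w => / (M * (p - w))) z0 z ((ln (p - z0) - ln (p - z)) / M)).
  { replace ((ln (p - z0) - ln (p - z)) / M)
      with (minus (- ln (p - z) / M) (- ln (p - z0) / M))
      by (unfold minus, plus, opp; simpl; field; lra).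
    apply (is_RInt_derive (V := R_CompleteNormedModule) (fun w => - ln (p - w) / M));
      intros x Hx; rewrite Rmin_left, Rmax_right in Hx by lra.
    - auto_derive; [lra | field; lra].
    - apply continuity_pt_filterlim, continuity_pt_inv; [reg |].
      apply Rgt_not_eq, Rmult_lt_0_compat; lra. }
  unfold escape_time. rewrite <- (is_RInt_unique _ _ _ _ Hint).
  apply RInt_le; [lra | eexists; exact Hint | apply ex_RInt_inv_F; lra |].
  intros x Hx. apply Rinv_le_contravar; [apply F_pos; lra | apply HFM; lra].
Qed.

Lemma escape_time_unbounded t : exists z, z0 <= z < p /\ t < escape_time z.
Proof.
  destruct F_linear_bound as [M [HM HFM]].
  set (ex := exp (- M * (Rabs t + 1))).
  assert (Hex : 0 < ex < 1).
  { split; [apply exp_pos |]. rewrite <- exp_0. apply exp_increasing.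
    pose proof (Rabs_pos t). nra. }
  exists (p - (p - z0) * ex). split; [nra |].
  apply Rlt_le_trans with ((ln (p - z0) - ln (p - (p - (p - z0) * ex))) / M);
    [| apply (escape_time_ge_log M HM HFM); nra].
  replace (p - (p - (p - z0) * ex)) with ((p - z0) * ex) by ring.
  rewrite ln_mult by lra. unfold ex. rewrite ln_exp.
  replace ((ln (p - z0) - (ln (p - z0) + - M * (Rabs t + 1))) / M) with (Rabs t + 1)
    by (field; lra).
  pose proof (RRle_abs t). lra.
Qed.

Lemma escape_time_inj z1 z2 : zl < z1 < p -> zl < z2 < p ->
  escape_time z1 = escape_time z2 -> z1 = z2.
Proof.
  intros Hz1 Hz2 Heq.
  destruct (Rtotal_order z1 z2) as [h | [h | h]]; [exfalso | exact h | exfalso].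
  - assert (escape_time z1 < escape_time z2) by (apply escape_time_increasing; lra). lra.
  - assert (escape_time z2 < escape_time z1) by (apply escape_time_increasing; lra). lra.
Qed.

Lemma escape_time_start : escape_time z0 = 0.
Proof. unfold escape_time. rewrite RInt_point. reflexivity. Qed.

Lemma escape_time_onto a t : zl < a < p -> escape_time a <= t ->
  exists z, a <= z < p /\ escape_time z = t.
Proof.
  intros Ha [Hat | <-]; [| exists a; split; [lra | reflexivity]].
  destruct (escape_time_unbounded t) as [z1 [Hz1 Htz1]].
  assert (Haz1 : a < z1).
  { destruct (Rlt_or_le a z1) as [h | [h | <-]]; [exact h | | lra].
    assert (escape_time z1 < escape_time a) by (apply escape_time_increasing; lra). lra. }
  destruct (IVT_interv (fun z => escape_time z - t) a z1) as [z [Hz Hzt]];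
    [| lra | lra | lra |].
  - intros w Hw.
    apply continuity_pt_minus; [| apply continuity_pt_const; intros ? ?; reflexivity].
    apply derivable_continuous_pt. exists (/ F w). apply escape_time_derivable. lra.
  - exists z. split; lra.
Qed.

Definition escape_sol t := epsilon (inhabits 0) (fun z => zl < z < p /\ escape_time z = t).

Lemma escape_sol_spec a t : zl < a < p -> escape_time a <= t ->
  a <= escape_sol t < p /\ escape_time (escape_sol t) = t.
Proof.
  intros Ha Hat.
  destruct (epsilon_spec (inhabits 0) (fun z => zl < z < p /\ escape_time z = t))
    as [Hrange Htime].
  { destruct (escape_time_onto a t Ha Hat) as [z Hz]. exists z. split; [lra | apply Hz]. }
  fold (escape_sol t) in Hrange, Htime. split; [split | exact Htime]; [| lra].
  destruct (Rle_or_lt a (escape_sol t)) as [h | h]; [exact h |].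
  assert (escape_time (escape_sol t) < escape_time a) by (apply escape_time_increasing; lra).
  lra.
Qed.

Lemma escape_sol_range t : 0 <= t -> z0 <= escape_sol t < p /\ escape_time (escape_sol t) = t.
Proof.
  intros Ht. apply escape_sol_spec; [lra | rewrite escape_time_start; exact Ht].
Qed.

Lemma escape_sol_start : escape_sol 0 = z0.
Proof.
  destruct (escape_sol_range 0 (Rle_refl 0)) as [Hrange Htime].
  apply escape_time_inj; [lra | lra |]. rewrite Htime, escape_time_start. reflexivity.
Qed.

Lemma escape_sol_derivable t : 0 <= t -> derivable_pt_lim escape_sol t (F (escape_sol t)).
Proof.
  (* a < z0, so that every t >= 0 lies strictly inside [escape_time a, escape_time b]. *)
  intros Ht. set (a := (zl + z0) / 2). set (b := escape_sol (t + 1)).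
  assert (Ha : escape_time a < 0).
  { rewrite <- escape_time_start. apply escape_time_increasing; unfold a; lra. }
  destruct (escape_sol_range (t + 1)) as [Hb HTb]; [lra |]. fold b in Hb, HTb.
  destruct (escape_sol_range t Ht) as [Hyt _].
  rewrite <- (Rinv_inv (F (escape_sol t))).
  apply (derivable_pt_lim_inverse escape_time escape_sol (fun z => / F z) a b).
  - unfold a. lra.
  - lra.
  - intros z Hz. apply escape_time_derivable. unfold a in Hz. lra.
  - intros z1 z2 Hz1 H12 Hz2. apply escape_time_increasing; unfold a in Hz1; lra.
  - intros x Hx. destruct (escape_sol_spec a x) as [Hxa HTx]; [unfold a; lra | lra |].
    repeat split; [lra | | exact HTx].
    destruct (Rle_or_lt (escape_sol x) b) as [h | h]; [exact h | exfalso].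
    assert (escape_time b < escape_time (escape_sol x)) by (apply escape_time_increasing; lra).
    lra.
  - apply Rinv_neq_0_compat, Rgt_not_eq, F_pos. lra.
Qed.

Lemma escape_sol_exceeds m : m < p -> exists t, 0 <= t /\ m < escape_sol t.
Proof.
  intros Hm. set (z := (Rmax m z0 + p) / 2).
  assert (Hz : z0 < z < p /\ m < z).
  { pose proof (Rmax_l m z0). pose proof (Rmax_r m z0).
    assert (Rmax m z0 < p) by (apply Rmax_lub_lt; lra). unfold z. lra. }
  assert (Hpos : 0 <= escape_time z).
  { rewrite <- escape_time_start. left. apply escape_time_increasing; lra. }
  exists (escape_time z). split; [exact Hpos |].
  destruct (escape_sol_range _ Hpos) as [Hrange Htime].
  rewrite (escape_time_inj (escape_sol (escape_time z)) z); lra.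
Qed.

End Escape.

Lemma unstable_of_pos_right F H (D : R -> Prop) e p : e < p ->
  continuity F -> continuity H ->
  (forall z, e < z < p -> 0 < F z) -> (forall z, F z = (p - z) * H z) ->
  (forall z, e < z < p -> D z) ->
  unstable F D e.
Proof.
  intros Hep HF HH Hpos Hfac HD Hst.
  destruct (Hst ((p - e) / 2)) as [d [Hd Hclose]]; [lra |].
  set (a := Rmin d ((p - e) / 2)).
  assert (Ha : 0 < a <= d /\ a <= (p - e) / 2).
  { unfold a. split; [split; [apply Rmin_pos | apply Rmin_l] | apply Rmin_r]; lra. }
  assert (Hstart : e + a / 4 < e + a / 2 < p) by lra.
  assert (Hpos' : forall z, e + a / 4 <= z < p -> 0 < F z) by (intros; apply Hpos; lra).
  set (y := escape_sol F (e + a / 4) (e + a / 2) p).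
  assert (Hsol : is_sol F D y).
  { intros t Ht. destruct (escape_sol_range F H _ _ p Hstart HF HH Hpos' Hfac t Ht) as [Hy _].
    split; [apply HD; fold y in Hy; lra |].
    exact (escape_sol_derivable F H _ _ p Hstart HF HH Hpos' Hfac t Ht). }
  destruct (escape_sol_exceeds F H _ _ p Hstart HF HH Hpos' Hfac (e + (p - e) / 2))
    as [t [Ht Hfar]]; [lra |].
  assert (H0 : Rabs (y 0 - e) < d).
  { unfold y. rewrite (escape_sol_start F H _ _ p Hstart HF HH Hpos' Hfac).
    apply Rabs_def1; lra. }
  specialize (Hclose y Hsol H0 t Ht). apply Rabs_def2 in Hclose. fold y in Hfar. lra.
Qed.

Lemma lyap_stable_reflect F D e : lyap_stable F D e ->
  lyap_stable (fun z => - F (- z)) (fun z => D (- z)) (- e).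
Proof.
  intros Hst eps Heps. destruct (Hst eps Heps) as [d [Hd Hclose]].
  exists d. split; [exact Hd |]. intros y Hy H0 t Ht.
  assert (Hsol : is_sol F D (fun t => - y t)).
  { intros t' Ht'. destruct (Hy t' Ht') as [HD Hd']. split; [exact HD |].
    rewrite <- (Ropp_involutive (F (- y t'))). apply derivable_pt_lim_opp, Hd'. }
  replace (y t - - e) with (- (- y t - e)) by ring. rewrite Rabs_Ropp.
  apply (Hclose _ Hsol); [| exact Ht].
  replace (- y 0 - e) with (- (y 0 - - e)) by ring. rewrite Rabs_Ropp. exact H0.
Qed.

Lemma unstable_of_neg_left F H (D : R -> Prop) e p : p < e ->
  continuity F -> continuity H ->
  (forall z, p < z < e -> F z < 0) -> (forall z, F z = (z - p) * H z) ->
  (forall z, p < z < e -> D z) ->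
  unstable F D e.
Proof.
  intros Hpe HF HH Hneg Hfac HD Hst.
  assert (Hopp : continuity (fun z => - z)) by (intros z; reg).
  apply (unstable_of_pos_right (fun z => - F (- z)) (fun z => - H (- z))
           (fun z => D (- z)) (- e) (- p)).
  - lra.
  - intros z. apply continuity_pt_opp, (continuity_pt_comp (fun z => - z) F); auto.
  - intros z. apply continuity_pt_opp, (continuity_pt_comp (fun z => - z) H); auto.
  - intros z Hz. specialize (Hneg (- z) ltac:(lra)). lra.
  - intros z. rewrite Hfac. ring.
  - intros z Hz. apply HD. lra.
  - apply lyap_stable_reflect, Hst.
Qed.

Lemma Fode_continuous s g u : continuity (Fode s g u).
Proof. intros z. unfold Fode. reg. Qed.

Lemma Fode_gamma0 s u z : 0 < s -> Fode s 0 u z = s * (1 - z) * (u / s - z).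
Proof. intros hs. unfold Fode. field. lra. Qed.

Lemma Fode_gamma0_zero_iff s u : 0 < s ->
  forall y, Fode s 0 u y = 0 <-> y = 1 \/ y = u / s.
Proof.
  intros hs y. rewrite Fode_gamma0 by exact hs. split.
  - intros Hy. destruct (Rmult_integral _ _ Hy) as [Hy' | Hy'];
      [destruct (Rmult_integral _ _ Hy') |]; [lra | left | right]; lra.
  - intros [-> | ->]; ring.
Qed.

Lemma LAS_gamma0 s u : 0 < s -> 0 < u -> LAS (Fode s 0 u) I01 (Rmin 1 (u / s)).
Proof.
  intros hs hu. assert (Ha : 0 < u / s) by (apply Rdiv_lt_0_compat; assumption).
  destruct (Rle_or_lt 1 (u / s)) as [Ha1 | Ha1].
  - rewrite Rmin_left by exact Ha1.
    apply (LAS_of_factor _ (fun z => s * (u / s - z)) 1 1); [unfold I01; lra | lra | | |].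
    + apply Fode_continuous.
    + intros z. rewrite Fode_gamma0 by exact hs. ring.
    + intros z Hz Hz1 _. unfold I01 in Hz. apply Rmult_lt_0_compat; lra.
  - rewrite Rmin_right by lra.
    apply (LAS_of_factor _ (fun z => s * (1 - z)) (u / s) (1 - u / s));
      [unfold I01; lra | lra | | |].
    + apply Fode_continuous.
    + intros z. rewrite Fode_gamma0 by exact hs. ring.
    + intros z _ _ Hz. apply Rabs_def2 in Hz. apply Rmult_lt_0_compat; lra.
Qed.

Lemma unstable_gamma0 s u : 0 < s -> 0 < u -> u / s <> 1 ->
  unstable (Fode s 0 u) wholeR (Rmax 1 (u / s)) /\
  (I01 (Rmax 1 (u / s)) -> unstable (Fode s 0 u) I01 (Rmax 1 (u / s))).
Proof.
  intros hs hu Ha1. assert (Ha : 0 < u / s) by (apply Rdiv_lt_0_compat; assumption).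
  destruct (Rlt_or_le (u / s) 1) as [Hlt | Hle].
  - rewrite Rmax_left by lra.
    assert (Hunst : forall D : R -> Prop, (forall z, u / s < z < 1 -> D z) ->
                      unstable (Fode s 0 u) D 1).
    { intros D HD. apply (unstable_of_neg_left _ (fun z => - s * (1 - z)) D 1 (u / s));
        [lra | apply Fode_continuous | intros z; reg | | | exact HD];
        intros z; rewrite Fode_gamma0 by exact hs.
      - intros Hz. assert (0 < s * (1 - z) * (z - u / s)) by
          (repeat apply Rmult_lt_0_compat; lra). lra.
      - ring. }
    split; [apply Hunst; intros; exact I | intros _; apply Hunst; unfold I01; intros; lra].
  - rewrite Rmax_right by lra. split; [| unfold I01; intros; lra].
    apply (unstable_of_neg_left _ (fun z => - s * (u / s - z)) wholeR (u / s) 1);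
      [lra | apply Fode_continuous | intros z; reg | | | intros; exact I];
      intros z; rewrite Fode_gamma0 by exact hs.
    + intros Hz. assert (0 < s * (z - 1) * (u / s - z)) by
        (repeat apply Rmult_lt_0_compat; lra). lra.
    + ring.
Qed.

Section Cubic.

Variables (F : R -> R) (g a b : R).
Hypothesis g_pos : 0 < g.
Hypothesis roots_order : 0 <= a <= b.
Hypothesis F_roots : forall z, F z = g * (1 - z) * (z - a) * (z - b).

Lemma cubic_continuous : continuity F.
Proof.
  intros z. apply (continuity_pt_locally_ext (fun z => g * (1 - z) * (z - a) * (z - b)) F 1);
    [lra | intros; symmetry; apply F_roots | reg].
Qed.

Lemma cubic_zero_iff y : F y = 0 <-> y = 1 \/ y = a \/ y = b.
Proof.
  rewrite F_roots. split.
  - intros Hy. destruct (Rmult_integral _ _ Hy) as [Hy1 | Hy1]; [| lra].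
    destruct (Rmult_integral _ _ Hy1) as [Hy2 | Hy2]; [| lra].
    destruct (Rmult_integral _ _ Hy2); lra.
  - intros [-> | [-> | ->]]; ring.
Qed.

Lemma cubic_LAS_one : b < 1 \/ 1 <= a -> LAS F I01 1.
Proof.
  intros Hab. set (q := fun z => g * (z - a) * (z - b)).
  assert (Hfac : forall z, F z = (1 - z) * q z) by (intros z; rewrite F_roots; unfold q; ring).
  destruct Hab as [Hb | Ha].
  - apply (LAS_of_factor F q 1 (1 - b) ltac:(unfold I01; lra) ltac:(lra) cubic_continuous Hfac).
    intros z _ _ Hzr. apply Rabs_def2 in Hzr. unfold q. repeat apply Rmult_lt_0_compat; lra.
  - apply (LAS_of_factor F q 1 1 ltac:(unfold I01; lra) ltac:(lra) cubic_continuous Hfac).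
    intros z Hz Hz1 _. unfold I01 in Hz. unfold q.
    replace (g * (z - a) * (z - b)) with (g * (a - z) * (b - z)) by ring.
    repeat apply Rmult_lt_0_compat; lra.
Qed.

Lemma cubic_LAS_lower : a < 1 -> a < b -> LAS F I01 a.
Proof.
  intros Ha1 Hab. pose proof (Rmin_l 1 b). pose proof (Rmin_r 1 b).
  assert (a < Rmin 1 b) by (apply Rmin_glb_lt; lra).
  apply (LAS_of_factor F (fun z => g * (1 - z) * (b - z)) a (Rmin 1 b - a));
    [unfold I01; lra | lra | exact cubic_continuous
    | intros z; rewrite F_roots; ring |].
  intros z _ _ Hzr. apply Rabs_def2 in Hzr.
  apply Rmult_lt_0_compat; [apply Rmult_lt_0_compat |]; lra.
Qed.

Lemma cubic_unstable_one : a < 1 <= b -> unstable F I01 1.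
Proof.
  intros Hab. apply (unstable_of_neg_left F (fun z => g * (1 - z) * (z - b)) I01 1 a);
    [lra | exact cubic_continuous | intros z; reg | | intros z; rewrite F_roots; ring |].
  - intros z Hz. rewrite F_roots.
    assert (0 < g * (1 - z) * (z - a) * (b - z)) by
      (repeat apply Rmult_lt_0_compat; lra).
    lra.
  - intros z Hz. unfold I01. lra.
Qed.

Lemma cubic_unstable_upper : b < 1 -> unstable F I01 b.
Proof.
  intros Hb. apply (unstable_of_pos_right F (fun z => g * (z - a) * (z - b)) I01 b 1);
    [lra | exact cubic_continuous | intros z; reg | | intros z; rewrite F_roots; ring |].
  - intros z Hz. rewrite F_roots. repeat apply Rmult_lt_0_compat; lra.
  - intros z Hz. unfold I01. lra.
Qed.

Lemma cubic_LAS_iff y :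
  LAS F I01 y <-> (y = 1 /\ (b < 1 \/ 1 <= a)) \/ (y = a /\ a < 1 /\ a < b).
Proof.
  split.
  - intros [Hy [HFy [Hst _]]]. unfold I01 in Hy. apply cubic_zero_iff in HFy.
    assert (H1 : a < 1 <= b -> y = 1 -> False)
      by (intros Hab ->; exact (cubic_unstable_one Hab Hst)).
    assert (Hb : b < 1 -> y = b -> False)
      by (intros Hb ->; exact (cubic_unstable_upper Hb Hst)).
    lra.
  - intros [[-> Hab] | [-> [Ha1 Hab]]]; [apply cubic_LAS_one | apply cubic_LAS_lower]; assumption.
Qed.

End Cubic.

Lemma Fode_one_factor s g u z : Fode s g u z = (1 - z) * (u - z * (s + g * (1 - z))).
Proof. unfold Fode. ring. Qed.

Section Regimes.

Variables s g u : R.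
Hypothesis hs : 0 < s.
Hypothesis hg : 0 < g.
Hypothesis hu : 0 < u.

Lemma sigma_disc_ucheck : sigma_disc s g u = 4 * (ucheck s g - u) / g.
Proof. unfold sigma_disc, ucheck. field. lra. Qed.

Lemma quadratic_factor_pos : ucheck s g < u -> forall z, 0 < u - z * (s + g * (1 - z)).
Proof.
  intros Hu z.
  assert (Hsq : g * (u - z * (s + g * (1 - z))) = (g * z - (s + g) / 2) ^ 2 + g * (u - ucheck s g))
    by (unfold ucheck; field; lra).
  assert (0 <= (g * z - (s + g) / 2) ^ 2) by apply pow2_ge_0.
  assert (0 < g * (u - ucheck s g)) by (apply Rmult_lt_0_compat; lra).
  nra.
Qed.

Lemma Fode_regime_above_ucheck : ucheck s g < u ->
  (forall y, Fode s g u y = 0 <-> y = 1) /\ LAS (Fode s g u) I01 1.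
Proof.
  intros Hu. assert (Hq := quadratic_factor_pos Hu). split.
  - intros y. rewrite Fode_one_factor. split; [| intros ->; ring].
    intros Hy. destruct (Rmult_integral _ _ Hy) as [Hy' | Hy']; [lra |].
    specialize (Hq y). lra.
  - apply (LAS_of_factor _ (fun z => u - z * (s + g * (1 - z))) 1 1);
      [unfold I01; lra | lra | apply Fode_continuous | apply Fode_one_factor |].
    intros z _ _ _. apply Hq.
Qed.

Hypothesis below_ucheck : u <= ucheck s g.

Local Notation y2 := (ybar2 s g u).
Local Notation y3 := (ybar3 s g u).

Lemma sigma_disc_nonneg : 0 <= sigma_disc s g u.
Proof. rewrite sigma_disc_ucheck. apply Rdiv_le_0_compat; lra. Qed.

Lemma ybar_sum : y2 + y3 = 1 + s / g.
Proof. unfold ybar2, ybar3. field. lra. Qed.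

Lemma ybar_sub : y3 - y2 = sqrt (sigma_disc s g u).
Proof. unfold ybar2, ybar3. field. lra. Qed.

Lemma ybar_mul : y2 * y3 = u / g.
Proof.
  unfold ybar2, ybar3. set (q := sqrt (sigma_disc s g u)).
  replace (/ 2 * (1 + s / g - q) * (/ 2 * (1 + s / g + q)))
    with (/ 4 * ((1 + s / g) ^ 2 - q * q)) by (field; lra).
  unfold q. rewrite sqrt_sqrt by apply sigma_disc_nonneg. unfold sigma_disc. field. lra.
Qed.

Lemma one_sub_ybar_mul : (1 - y2) * (1 - y3) = (u - s) / g.
Proof.
  replace ((1 - y2) * (1 - y3)) with (1 - (y2 + y3) + y2 * y3) by ring.
  rewrite ybar_sum, ybar_mul. field. lra.
Qed.

Lemma ybar2_le_ybar3 : y2 <= y3.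
Proof. pose proof ybar_sub. pose proof (sqrt_pos (sigma_disc s g u)). lra. Qed.

Lemma ybar2_pos : 0 < y2.
Proof.
  pose proof ybar_sum. pose proof ybar_mul. pose proof ybar2_le_ybar3.
  assert (0 < s / g) by (apply Rdiv_lt_0_compat; lra).
  assert (0 < u / g) by (apply Rdiv_lt_0_compat; lra).
  nra.
Qed.

Lemma Fode_ybar_roots z : Fode s g u z = g * (1 - z) * (z - y2) * (z - y3).
Proof.
  transitivity (g * (1 - z) * (z * z - (y2 + y3) * z + y2 * y3)); [| ring].
  rewrite ybar_sum, ybar_mul. unfold Fode. field. lra.
Qed.

Lemma ybar_order : 0 <= y2 <= y3.
Proof. split; [left; exact ybar2_pos | exact ybar2_le_ybar3]. Qed.

Lemma Fode_zero_iff_ybar y : Fode s g u y = 0 <-> y = 1 \/ y = y2 \/ y = y3.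
Proof. exact (cubic_zero_iff _ g _ _ hg ybar_order Fode_ybar_roots y). Qed.

Lemma Fode_LAS_iff y : LAS (Fode s g u) I01 y <->
  (y = 1 /\ (y3 < 1 \/ 1 <= y2)) \/ (y = y2 /\ y2 < 1 /\ y2 < y3).
Proof. exact (cubic_LAS_iff _ g _ _ hg ybar_order Fode_ybar_roots y). Qed.

Lemma ybar_at_uhat : u = uhat s -> (y2 = 1 /\ y3 = s / g) \/ (y2 = s / g /\ y3 = 1).
Proof.
  unfold uhat. intros Hus. pose proof ybar_sum.
  assert (H0 : (1 - y2) * (1 - y3) = 0) by (rewrite one_sub_ybar_mul, Hus; field; lra).
  destruct (Rmult_integral _ _ H0); [left | right]; lra.
Qed.

Lemma ybar2_lt_ybar3 : u < ucheck s g -> y2 < y3.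
Proof.
  intros Hu. pose proof ybar_sub. enough (0 < sqrt (sigma_disc s g u)) by lra.
  apply sqrt_lt_R0. rewrite sigma_disc_ucheck. apply Rdiv_lt_0_compat; lra.
Qed.

Lemma ybar_at_ucheck : u = ucheck s g -> y2 = (g + s) / (2 * g) /\ y3 = (g + s) / (2 * g).
Proof.
  intros Hu. assert (Hsig : sigma_disc s g u = 0) by (rewrite sigma_disc_ucheck, Hu; field; lra).
  unfold ybar2, ybar3. rewrite Hsig, sqrt_0. split; field; lra.
Qed.

Lemma s_div_g_mul : s / g * g = s.
Proof. field. lra. Qed.

Lemma Fode_regime_below_uhat : u < uhat s ->
  0 < y2 /\ y2 < 1 /\ 1 < y3 /\ (forall y, LAS (Fode s g u) I01 y <-> y = y2).
Proof.
  unfold uhat. intros Hus. pose proof ybar2_pos. pose proof ybar2_le_ybar3.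
  assert (Hprod : (1 - y2) * (1 - y3) < 0) by (rewrite one_sub_ybar_mul; apply Rdiv_neg_pos; lra).
  assert (Hpos : y2 < 1 < y3) by nra.
  split; [lra | split; [lra | split; [lra |]]].
  intros y. rewrite Fode_LAS_iff. lra.
Qed.

Lemma Fode_regime_uhat_gamma_lt : u = uhat s -> g < s ->
  y2 = 1 /\ 1 < y3 /\ y3 = s / g /\ (forall y, LAS (Fode s g u) I01 y <-> y = 1).
Proof.
  intros Hus Hgs. pose proof ybar2_le_ybar3. pose proof s_div_g_mul.
  assert (1 < s / g) by nra.
  destruct (ybar_at_uhat Hus) as [[Hy2 Hy3] | [Hy2 Hy3]]; [| lra].
  split; [exact Hy2 | split; [lra | split; [exact Hy3 |]]].
  intros y. rewrite Fode_LAS_iff. lra.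
Qed.

Lemma Fode_regime_uhat_gamma_eq : u = uhat s -> g = s ->
  y2 = 1 /\ y3 = 1 /\ (forall y, LAS (Fode s g u) I01 y <-> y = 1).
Proof.
  intros Hus Hgs. assert (Hk : s / g = 1) by (rewrite Hgs; field; lra).
  assert (Hy : y2 = 1 /\ y3 = 1) by (destruct (ybar_at_uhat Hus); lra).
  split; [lra | split; [lra |]].
  intros y. rewrite Fode_LAS_iff. lra.
Qed.

Lemma Fode_regime_uhat_gamma_gt : u = uhat s -> s < g ->
  0 < y2 /\ y2 = s / g /\ y2 < 1 /\ y3 = 1 /\
  (forall y, LAS (Fode s g u) I01 y <-> y = y2).
Proof.
  intros Hus Hgs. pose proof ybar2_pos. pose proof ybar2_le_ybar3. pose proof s_div_g_mul.
  assert (s / g < 1) by nra.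
  destruct (ybar_at_uhat Hus) as [[Hy2 Hy3] | [Hy2 Hy3]]; [lra |].
  split; [lra | split; [exact Hy2 | split; [lra | split; [exact Hy3 |]]]].
  intros y. rewrite Fode_LAS_iff. lra.
Qed.

Lemma ybar_between : uhat s < u -> u < ucheck s g ->
  0 < y2 /\ y2 < y3 /\ 0 < (1 - y2) * (1 - y3).
Proof.
  unfold uhat. intros Hsu Huc. split; [exact ybar2_pos | split; [exact (ybar2_lt_ybar3 Huc) |]].
  rewrite one_sub_ybar_mul. apply Rdiv_lt_0_compat; lra.
Qed.

Lemma Fode_regime_between_gamma_lt : uhat s < u -> u < ucheck s g -> g < s ->
  1 < y2 /\ y2 < y3 /\ (forall y, LAS (Fode s g u) I01 y <-> y = 1).
Proof.
  intros Hsu Huc Hgs. destruct (ybar_between Hsu Huc) as [H2 [H23 Hprod]].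
  pose proof ybar_sum. pose proof s_div_g_mul. assert (1 < s / g) by nra.
  assert (1 < y2) by nra.
  split; [lra | split; [lra |]].
  intros y. rewrite Fode_LAS_iff. lra.
Qed.

Lemma Fode_regime_between_gamma_gt : uhat s < u -> u < ucheck s g -> s < g ->
  0 < y2 /\ y2 < y3 /\ y3 < 1 /\
  (forall y, LAS (Fode s g u) I01 y <-> y = y2 \/ y = 1).
Proof.
  intros Hsu Huc Hgs. destruct (ybar_between Hsu Huc) as [H2 [H23 Hprod]].
  pose proof ybar_sum. pose proof s_div_g_mul. assert (s / g < 1) by nra.
  assert (y3 < 1) by nra.
  split; [lra | split; [lra | split; [lra |]]].
  intros y. rewrite Fode_LAS_iff. lra.
Qed.

Lemma Fode_regime_ucheck_gamma_lt : u = ucheck s g -> g < s ->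
  1 < y2 /\ y2 = y3 /\ y2 = (g + s) / (2 * g) /\
  (forall y, LAS (Fode s g u) I01 y <-> y = 1).
Proof.
  intros Huc Hgs. destruct (ybar_at_ucheck Huc) as [Hy2 Hy3].
  assert (Hmid : (g + s) / (2 * g) * (2 * g) = g + s) by (field; lra).
  assert (1 < (g + s) / (2 * g)) by nra.
  split; [lra | split; [lra | split; [exact Hy2 |]]].
  intros y. rewrite Fode_LAS_iff. lra.
Qed.

Lemma Fode_regime_ucheck_gamma_eq : u = ucheck s g -> g = s ->
  y2 = 1 /\ y3 = 1 /\ (forall y, LAS (Fode s g u) I01 y <-> y = 1).
Proof.
  intros Huc Hgs. destruct (ybar_at_ucheck Huc) as [Hy2 Hy3].
  assert (Hmid : (g + s) / (2 * g) = 1) by (rewrite Hgs; field; lra).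
  split; [lra | split; [lra |]].
  intros y. rewrite Fode_LAS_iff. lra.
Qed.

Lemma Fode_regime_ucheck_gamma_gt : u = ucheck s g -> s < g ->
  / 2 < y2 /\ y2 = y3 /\ y2 = (g + s) / (2 * g) /\ y2 < 1 /\
  (forall y, LAS (Fode s g u) I01 y <-> y = 1).
Proof.
  intros Huc Hgs. destruct (ybar_at_ucheck Huc) as [Hy2 Hy3].
  assert (Hmid : (g + s) / (2 * g) * (2 * g) = g + s) by (field; lra).
  assert (/ 2 < (g + s) / (2 * g) < 1) by (split; nra).
  split; [lra | split; [lra | split; [exact Hy2 | split; [lra |]]]].
  intros y. rewrite Fode_LAS_iff. lra.
Qed.

End Regimes.

Theorem proposition2p2 (s u g : R) (hs : 0 < s) (hu : 0 < u) (hg : 0 <= g) :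
  (* (a) gamma = 0 *)
  (g = 0 ->
     (forall y, Fode s g u y = 0 <-> y = 1 \/ y = u / s) /\
     (u = uhat s -> u / s = 1) /\
     LAS (Fode s g u) I01 (Rmin 1 (u / s)) /\
     (u / s <> 1 ->
        unstable (Fode s g u) wholeR (Rmax 1 (u / s)) /\
        (I01 (Rmax 1 (u / s)) -> unstable (Fode s g u) I01 (Rmax 1 (u / s))))) /\
  (* (b) gamma > 0 *)
  (0 < g ->
     (ucheck s g < u ->
        (forall y, Fode s g u y = 0 <-> y = 1) /\ LAS (Fode s g u) I01 1) /\
     (u <= ucheck s g ->
        0 <= sigma_disc s g u /\
        (forall y, Fode s g u y = 0 <->
           y = 1 \/ y = ybar2 s g u \/ y = ybar3 s g u) /\
        (u < uhat s ->
           0 < ybar2 s g u /\ ybar2 s g u < 1 /\ 1 < ybar3 s g u /\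
           (forall y, LAS (Fode s g u) I01 y <-> y = ybar2 s g u)) /\
        (u = uhat s -> g < s ->
           ybar2 s g u = 1 /\ 1 < ybar3 s g u /\ ybar3 s g u = s / g /\
           (forall y, LAS (Fode s g u) I01 y <-> y = 1)) /\
        (u = uhat s -> g = s ->
           ybar2 s g u = 1 /\ ybar3 s g u = 1 /\
           (forall y, LAS (Fode s g u) I01 y <-> y = 1)) /\
        (u = uhat s -> s < g ->
           0 < ybar2 s g u /\ ybar2 s g u = s / g /\ ybar2 s g u < 1 /\
           ybar3 s g u = 1 /\
           (forall y, LAS (Fode s g u) I01 y <-> y = ybar2 s g u)) /\
        (uhat s < u -> u < ucheck s g -> g < s ->
           1 < ybar2 s g u /\ ybar2 s g u < ybar3 s g u /\
           (forall y, LAS (Fode s g u) I01 y <-> y = 1)) /\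
        (uhat s < u -> u < ucheck s g -> s < g ->
           0 < ybar2 s g u /\ ybar2 s g u < ybar3 s g u /\ ybar3 s g u < 1 /\
           (forall y, LAS (Fode s g u) I01 y <-> y = ybar2 s g u \/ y = 1)) /\
        (u = ucheck s g -> g < s ->
           1 < ybar2 s g u /\ ybar2 s g u = ybar3 s g u /\
           ybar2 s g u = (g + s) / (2 * g) /\
           (forall y, LAS (Fode s g u) I01 y <-> y = 1)) /\
        (u = ucheck s g -> g = s ->
           ybar2 s g u = 1 /\ ybar3 s g u = 1 /\
           (forall y, LAS (Fode s g u) I01 y <-> y = 1)) /\
        (u = ucheck s g -> s < g ->
           / 2 < ybar2 s g u /\ ybar2 s g u = ybar3 s g u /\
           ybar2 s g u = (g + s) / (2 * g) /\ ybar2 s g u < 1 /\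
           (forall y, LAS (Fode s g u) I01 y <-> y = 1)))).
Proof.
  split.
  - intros ->. split; [exact (Fode_gamma0_zero_iff s u hs) |].
    split; [unfold uhat; intros ->; field; lra |].
    split; [exact (LAS_gamma0 s u hs hu) | exact (unstable_gamma0 s u hs hu)].
  - intros hg'. split; [apply Fode_regime_above_ucheck; assumption |].
    intros Hle.
    refine (conj _ (conj _ (conj _ (conj _ (conj _ (conj _ (conj _ (conj _ (conj _
              (conj _ _))))))))));
      [ apply sigma_disc_nonneg | apply Fode_zero_iff_ybar
      | apply Fode_regime_below_uhat
      | apply Fode_regime_uhat_gamma_lt | apply Fode_regime_uhat_gamma_eq
      | apply Fode_regime_uhat_gamma_gt
      | apply Fode_regime_between_gamma_lt | apply Fode_regime_between_gamma_gt
      | apply Fode_regime_ucheck_gamma_lt | apply Fode_regime_ucheck_gamma_eq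
      | apply Fode_regime_ucheck_gamma_gt ]; assumption.
Qed.
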